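(* Let $N=U\oplus\langle 4\rangle\oplus E_8(2)$ and $N'=\langle 2\rangle\oplus U(2)\oplus E_8$. Then $$\mathcal{D}(N)/\mathrm{O}(N)\cong\mathcal{D}(N')/\mathrm{O}(N').$$
   Context: Lattice conventions: $U$ is the even unimodular lattice of signature $(1,1)$; $E_8$ is the negative definite root lattice; $\langle m\rangle$ is generated by a vector of norm $m$; $L(m)$ is $L$ with its bilinear form multiplied by the rational number $m$. For a lattice $N$ of signature $(2,n)$, $\mathcal{D}(N)=\{[\omega]\in\mathbb{P}(N\otimes\mathbb{C}) : \omega\cdot\omega=0,\ \omega\cdot\bar\omega>0\}$, with the action of the orthogonal group $\mathrm{O}(N)$. *)

From HB Require Import structures.
From mathcomp Require Import all_boot all_order all_algebra.
From mathcomp Require Import complex.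
From mathcomp Require Import all_classical all_reals all_analysis.
Set Implicit Arguments. Unset Strict Implicit. Unset Printing Implicit Defensive.
Import Order.TTheory GRing.Theory Num.Theory.
Import numFieldNormedType.Exports.
Local Open Scope classical_set_scope.
Local Open Scope ring_scope.

(** Even lattices are given by integral Gram matrices on Z^n (column vectors). *)

(** Edges of the E8 Dynkin diagram (0-indexed, Bourbaki numbering). *)
Definition e8_edge (i j : nat) : bool :=
  [|| (i, j) == (0, 2)%N, (i, j) == (2, 3)%N, (i, j) == (3, 4)%N,
      (i, j) == (4, 5)%N, (i, j) == (5, 6)%N, (i, j) == (6, 7)%N
    | (i, j) == (1, 3)%N].

(** Entries of the NEGATIVE definite E8 root lattice Gram matrix. *)
Definition e8_entry (i j : nat) : int :=
  if i == j then (-2)%R else if e8_edge i j || e8_edge j i then 1 else 0.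

(** N = U + <4> + E8(2): indices 0,1 = U ; 2 = <4> ; 3..10 = E8(2). *)
Definition gramN : 'M[int]_11 :=
  \matrix_(i < 11, j < 11)
    if ((i < 2) && (j < 2))%N then (if (i == j :> nat) then 0 else 1)
    else if ((i == 2 :> nat) && (j == 2 :> nat)) then 4
    else if ((3 <= i) && (3 <= j))%N then 2 * e8_entry (i - 3) (j - 3)
    else 0.

(** N' = <2> + U(2) + E8: index 0 = <2> ; 1,2 = U(2) ; 3..10 = E8. *)
Definition gramN' : 'M[int]_11 :=
  \matrix_(i < 11, j < 11)
    if ((i == 0 :> nat) && (j == 0 :> nat)) then 2
    else if [&& (1 <= i)%N, (i < 3)%N, (1 <= j)%N & (j < 3)%N]
         then (if (i == j :> nat) then 0 else 2)
    else if ((3 <= i) && (3 <= j))%N then e8_entry (i - 3) (j - 3)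
    else 0.

Section Period.
Variables (R : realType) (n : nat).
Definition Cx : numFieldType := R[i].
Local Notation C := Cx.

Definition orth_group (G : 'M[int]_n) : set 'M[int]_n :=
  [set g | g \in unitmx /\ g^T *m G *m g = G].

Definition gramC (G : 'M[int]_n) : 'M[C]_n := map_mx (fun z : int => z%:~R) G.

Definition bil (G : 'M[int]_n) (v w : 'cV[C]_n) : C := (v^T *m gramC G *m w) 0 0.

(** Affine cone over the period domain D(L):
    nonzero w with w.w = 0 and w.(conj w) > 0. *)
Definition period_cone (G : 'M[int]_n) : set 'cV[C]_n :=
  [set w | bil G w w = 0 /\ 0 < bil G w (map_mx (fun z : C => z^*) w)].

(** Two points of the cone define the same point of D(L)/O(L):
    w' = lambda * g w with lambda in C^* and g in O(L). *)
Definition orb_equiv (G : 'M[int]_n) (w w' : 'cV[C]_n) : Prop :=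
  exists (lam : C) (g : 'M[int]_n),
    lam != 0 /\ orth_group G g /\ w' = lam *: (map_mx (fun z : int => z%:~R) g *m w).

Definition holo_on (f : 'cV[C]_n -> 'cV[C]_n) (U : set 'cV[C]_n) : Prop :=
  forall x, U x -> differentiable f x.

(** D(L)/O(L) and D(L')/O(L') are isomorphic: there are mutually inverse maps
    between the quotients, both induced by holomorphic maps (defined on open
    neighbourhoods of the affine cones over the period domains). *)
Definition period_quotients_isomorphic (G G' : 'M[int]_n) : Prop :=
  exists (Phi Psi : 'cV[C]_n -> 'cV[C]_n) (U V : set 'cV[C]_n),
    [/\ open U, open V, period_cone G `<=` U & period_cone G' `<=` V] /\
    [/\ holo_on Phi U, holo_on Psi V,
        (forall w, period_cone G w -> period_cone G' (Phi w)) &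
        (forall w, period_cone G' w -> period_cone G (Psi w))] /\
    [/\ (forall w w', period_cone G w -> period_cone G w' ->
           orb_equiv G w w' -> orb_equiv G' (Phi w) (Phi w')),
        (forall w w', period_cone G' w -> period_cone G' w' ->
           orb_equiv G' w w' -> orb_equiv G (Psi w) (Psi w')),
        (forall w, period_cone G w -> orb_equiv G w (Psi (Phi w))) &
        (forall w, period_cone G' w -> orb_equiv G' w (Phi (Psi w)))].

End Period.

From HB Require Import structures.
From mathcomp Require Import all_boot all_order all_algebra.
From mathcomp Require Import complex.
From mathcomp Require Import all_classical all_reals all_analysis.
From mathcomp Require Import ring.
Set Implicit Arguments. Unset Strict Implicit. Unset Printing Implicit Defensive.
Import Order.TTheory GRing.Theory Num.Theory.
Import numFieldNormedType.Exports.
Local Open Scope ring_scope.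

(* There are integral matrices X, Y ([simNN'], [simN'N]) with X Y = Y X = 2,
   X^T G' X = 2 G and Y^T G Y = 2 G': they identify N(2) with a sublattice
   of N' containing 2N' and N'(2) with a sublattice of N containing 2N.
   Hence w |-> X w maps the cone over D(N) to the cone over D(N'), and
   w |-> Y w is its inverse up to the scalar 2.  The map descends to the
   quotients because g |-> X g Y / 2 sends O(N) into O(N') (and symmetrically):
   the only issue is integrality, which holds because O(N) preserves
   N \cap 2N^v (the vectors with even U-coordinates), while O(N') preserves
   the vectors of N' \cap 2N'^v of norm divisible by 4 (those with even
   coordinates along <2> and E8). *)

Section IntegralMatrices.
Variable n : nat.
Implicit Types (M X Y G g : 'M[int]_n).

Lemma mulmx_col_even M X j :
  (forall k, (2 %| X k j)%Z) -> forall i, (2 %| (M *m X) i j)%Z.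
Proof. by move=> Xj i; rewrite mxE; apply: rpred_sum => k _; apply: dvdz_mull. Qed.

Lemma mulmx_row_delta M X i k j (c : int) :
  (forall m, M i m = if m == k then c else 0) -> (M *m X) i j = c * X k j.
Proof.
move=> Mi; rewrite mxE (bigD1 k) //= Mi eqxx big1 ?addr0 // => m /negbTE mk.
by rewrite Mi mk mul0r.
Qed.

Lemma orth_gram_col_even G g j :
  g \in unitmx -> g^T *m G *m g = G ->
  (forall k, (2 %| G k j)%Z) -> forall i, (2 %| (G *m g) i j)%Z.
Proof.
move=> gu gG Gj; have -> : G *m g = (invmx g)^T *m G.
  by rewrite -{2}gG !mulmxA -trmx_mul mulmxV // trmx1 mul1mx.
exact: mulmx_col_even.
Qed.

Lemma mulmx3_even X M Y :
  (forall i k l j, [|| (2 %| X i k)%Z, (2 %| M k l)%Z | (2 %| Y l j)%Z]) ->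
  forall i j, (2 %| (X *m M *m Y) i j)%Z.
Proof.
move=> XMY i j; rewrite mxE; apply: rpred_sum => l _; rewrite mxE mulr_suml.
apply: rpred_sum => k _; case/or3P: (XMY i k l j) => even_entry.
- exact/dvdz_mulr/dvdz_mulr.
- exact/dvdz_mulr/dvdz_mull.
- exact: dvdz_mull.
Qed.

(* The conjugate of [g] by [X] is [X g Y / 2]; its integrality is the only
   condition for it to lie in O(G2). *)
Lemma conj_orth_scaled (G1 G2 : 'M[int]_n) X Y g :
  X *m Y = 2%:M -> Y *m X = 2%:M ->
  X^T *m G2 *m X = 2 *: G1 -> Y^T *m G1 *m Y = 2 *: G2 ->
  g \in unitmx -> g^T *m G1 *m g = G1 ->
  (forall i j, (2 %| (X *m g *m Y) i j)%Z) ->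
  exists2 Q, Q \in unitmx /\ Q^T *m G2 *m Q = G2 & Q *m X = X *m g.
Proof.
move=> XY YX XG YG gu gG even_XgY.
have two_neq0 : (2 : int) != 0 by [].
pose Q : 'M[int]_n := \matrix_(i, j) ((X *m g *m Y) i j %/ 2)%Z.
have QE : 2 *: Q = X *m g *m Y.
  by apply/matrixP => i j; rewrite [LHS]mxE [Q i j]mxE mulrC divzK.
exists Q; first split.
- have detQ : 2 ^+ n * \det Q = 2 ^+ n * \det g.
    by rewrite -detZ QE !det_mulmx mulrAC -det_mulmx XY det_scalar mulrC.
  have two_pow_neq0 : (2 : int) ^+ n != 0 by rewrite expf_neq0.
  by rewrite unitmxE (mulfI two_pow_neq0 detQ) -unitmxE.
- apply/(scalemx_inj two_neq0)/(scalemx_inj two_neq0); rewrite [2 *: (2 *: G2)]scalerA.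
  have -> : 2 *: (2 *: (Q^T *m G2 *m Q)) = (2 *: Q)^T *m G2 *m (2 *: Q).
    have -> : (2 *: Q)^T = 2 *: Q^T by apply/matrixP => i j; rewrite !mxE.
    by rewrite -!scalemxAl -scalemxAr.
  rewrite QE.
  have -> : (X *m g *m Y)^T *m G2 *m (X *m g *m Y) =
      Y^T *m (g^T *m (X^T *m G2 *m X) *m g) *m Y by rewrite !trmx_mul !mulmxA.
  by rewrite XG -scalemxAr -scalemxAl gG -scalemxAr -scalemxAl YG scalerA.
- apply: (scalemx_inj two_neq0).
  by rewrite -[RHS]mul_mx_scalar -YX mulmxA -QE scalemxAl.
Qed.

End IntegralMatrices.
Section PeriodCones.
Variables (R : realType) (n : nat).
Local Notation C := (Cx R).
Implicit Types (M X Y : 'M[int]_n) (w v : 'cV[C]_n).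

Local Notation mapC M := (map_mx (fun z : int => z%:~R : C) M).

Lemma conj_mapC_mul M w :
  map_mx (fun z : C => z^*) (mapC M *m w) = mapC M *m map_mx (fun z : C => z^*) w.
Proof.
apply/matrixP => i j; rewrite !mxE rmorph_sum; apply: eq_bigr => k _.
by rewrite !mxE rmorphM /= rmorph_int.
Qed.

Lemma bil_mapC_scaled (G1 G2 : 'M[int]_n) X w v :
  X^T *m G2 *m X = 2 *: G1 -> bil G2 (mapC X *m w) (mapC X *m v) = 2 * bil G1 w v.
Proof.
move=> XG; rewrite /bil /gramC.
have -> : (mapC X *m w)^T *m mapC G2 *m (mapC X *m v) =
    w^T *m mapC (X^T *m G2 *m X) *m v.
  by rewrite !map_mxM trmx_mul map_trmx !mulmxA.
rewrite XG.
have -> : mapC (2 *: G1) = 2 *: mapC G1 by apply/matrixP => i j; rewrite !mxE intrM.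
by rewrite -scalemxAr -scalemxAl mxE.
Qed.

Lemma period_cone_mapC_scaled (G1 G2 : 'M[int]_n) X w :
  X^T *m G2 *m X = 2 *: G1 -> period_cone G1 w -> period_cone G2 (mapC X *m w).
Proof.
move=> XG [isotropic positive]; split.
  by rewrite (bil_mapC_scaled _ _ XG) isotropic mulr0.
by rewrite conj_mapC_mul (bil_mapC_scaled _ _ XG) mulr_gt0 // ltr0n.
Qed.

Lemma holo_on_mulmx (M : 'M[C]_n) : holo_on (fun w => M *m w) setT.
Proof.
move=> x _.
have -> : (fun w => M *m w) = \sum_(k < n) (fun w : 'cV[C]_n => w k 0 *: col k M).
  apply/funext => w; rewrite fct_sumE; apply/matrixP => i j.
  by rewrite !mxE summxE; apply: eq_bigr => k _; rewrite !mxE (ord1 j) mulrC.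
apply: differentiable_sum => k; apply: differentiableZl.
exact: differentiable_coord.
Qed.

Lemma orb_equiv_mapC_scaled (G1 G2 : 'M[int]_n) X Y w w' :
  X *m Y = 2%:M -> Y *m X = 2%:M ->
  X^T *m G2 *m X = 2 *: G1 -> Y^T *m G1 *m Y = 2 *: G2 ->
  (forall g, g \in unitmx -> g^T *m G1 *m g = G1 ->
     forall i j, (2 %| (X *m g *m Y) i j)%Z) ->
  orb_equiv G1 w w' -> orb_equiv G2 (mapC X *m w) (mapC X *m w').
Proof.
move=> XY YX XG YG even_XgY [lam [g [lam_neq0 [[gu gG] ->]]]].
have [Q [Qu QG] QX] := conj_orth_scaled XY YX XG YG gu gG (even_XgY g gu gG).
exists lam, Q; do 2!split => //.
by rewrite -scalemxAr !mulmxA -!map_mxM QX.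
Qed.

Lemma orb_equiv_mapC_back (G : 'M[int]_n) X Y w :
  Y *m X = 2%:M -> orb_equiv G w (mapC Y *m (mapC X *m w)).
Proof.
move=> YX; exists 2, 1%:M; split; first by rewrite pnatr_eq0.
split; first by split; [exact: unitmx1 | rewrite trmx1 mul1mx mulmx1].
rewrite map_mx1 mul1mx mulmxA -map_mxM YX.
by rewrite map_scalar_mx mul_scalar_mx.
Qed.

Lemma period_quotients_isomorphic_of_similitudes (G1 G2 : 'M[int]_n) X Y :
  X *m Y = 2%:M -> Y *m X = 2%:M ->
  X^T *m G2 *m X = 2 *: G1 -> Y^T *m G1 *m Y = 2 *: G2 ->
  (forall g, g \in unitmx -> g^T *m G1 *m g = G1 ->
     forall i j, (2 %| (X *m g *m Y) i j)%Z) ->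
  (forall h, h \in unitmx -> h^T *m G2 *m h = G2 ->
     forall i j, (2 %| (Y *m h *m X) i j)%Z) ->
  period_quotients_isomorphic R G1 G2.
Proof.
move=> XY YX XG YG even_XgY even_YhX.
exists (fun w => mapC X *m w), (fun w => mapC Y *m w), setT, setT.
split; first by split => //; exact: openT.
split; first by split => [||w|w]; [exact: holo_on_mulmx | exact: holo_on_mulmx
  | exact: period_cone_mapC_scaled | exact: period_cone_mapC_scaled].
split => [w w' _ _|w w' _ _|w _|w _].
- exact: (orb_equiv_mapC_scaled XY YX XG YG even_XgY).
- exact: (orb_equiv_mapC_scaled YX XY YG XG even_YhX).
- exact: orb_equiv_mapC_back YX.
- exact: orb_equiv_mapC_back XY.
Qed.

End PeriodCones.

(* Concrete matrices are given by functions on [nat], so that identities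
   between them reduce to boolean checks decided by [vm_compute] (matrix
   constructors and big operators are locked). *)
Section FunMatrices.
Variable n : nat.

Definition fun_mx (f : nat -> nat -> int) : 'M[int]_n := \matrix_(i, j) f i j.

Definition fun_mul (f g : nat -> nat -> int) (i j : nat) : int :=
  foldr +%R 0 [seq f i k * g k j | k <- iota 0 n].

Let ord_in_iota (i : 'I_n) : (i : nat) \in iota 0 n.
Proof. by rewrite mem_iota ltn_ord. Qed.

Definition all_entries (P : nat -> nat -> bool) : bool :=
  all (fun i => all (P i) (iota 0 n)) (iota 0 n).

Lemma all_entriesP P : all_entries P -> forall i j : 'I_n, P i j.
Proof.
move=> /allP all_rows i j.
exact: (allP (all_rows i (ord_in_iota i))) _ (ord_in_iota j).
Qed.

Lemma fun_mxM f g : fun_mx f *m fun_mx g = fun_mx (fun_mul f g).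
Proof.
apply/matrixP => i j; rewrite !mxE /fun_mul foldrE big_map.
have -> : iota 0 n = index_iota 0 n by rewrite /index_iota subn0.
by rewrite big_mkord; apply: eq_bigr => k _; rewrite !mxE.
Qed.

Lemma fun_mx_tr f : (fun_mx f)^T = fun_mx (fun i j => f j i).
Proof. by apply/matrixP => i j; rewrite !mxE. Qed.

Lemma fun_mx_eq f g : all_entries (fun i j => f i j == g i j) -> fun_mx f = fun_mx g.
Proof. by move=> fg; apply/matrixP => i j; rewrite !mxE; apply/eqP/(all_entriesP fg). Qed.

Lemma scalar_fun_mx (c : int) : c%:M = fun_mx (fun i j => if i == j then c else 0).
Proof.
by apply/matrixP => i j; rewrite !mxE -[(i : nat) == j]/(i == j); case: (i == j).
Qed.

Lemma scale_fun_mx (c : int) f : c *: fun_mx f = fun_mx (fun i j => c * f i j).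
Proof. by apply/matrixP => i j; rewrite !mxE. Qed.

Lemma fun_mx_row_delta (f : nat -> nat -> int) (a b : 'I_n) c (X : 'M[int]_n) j :
  all (fun m => f a m == (if m == b then c else 0)) (iota 0 n) ->
  (fun_mx f *m X) a j = c * X b j.
Proof.
move=> /allP row_a; apply: mulmx_row_delta => m; rewrite mxE.
exact/eqP/row_a/ord_in_iota.
Qed.

End FunMatrices.

Definition gramN_fun (i j : nat) : int :=
  if ((i < 2) && (j < 2))%N then (if i == j then 0 else 1)
  else if (i == 2) && (j == 2) then 4
  else if ((3 <= i) && (3 <= j))%N then 2 * e8_entry (i - 3) (j - 3)
  else 0.

Definition gramN'_fun (i j : nat) : int :=
  if (i == 0) && (j == 0) then 2
  else if [&& (1 <= i)%N, (i < 3)%N, (1 <= j)%N & (j < 3)%N]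
       then (if i == j then 0 else 2)
  else if ((3 <= i) && (3 <= j))%N then e8_entry (i - 3) (j - 3)
  else 0.

Lemma gramNE : gramN = fun_mx 11 gramN_fun.
Proof. by apply/matrixP => i j; rewrite !mxE. Qed.

Lemma gramN'E : gramN' = fun_mx 11 gramN'_fun.
Proof. by apply/matrixP => i j; rewrite !mxE. Qed.

(* [simNN'] sends the basis e_0, e_1 of U to the basis f_1, f_2 of U(2), the
   generator e_2 of <4> to 2 f_0 and E8(2) onto 2 E8; [simN'N] is 2 times its
   inverse. *)
Definition simNN'_fun (i k : nat) : int :=
  match i, k with
  | 1, 0 | 2, 1 => 1
  | 0, 2 => 2
  | _, _ => if (i == k) && (3 <= i)%N then 2 else 0
  end%N.

Definition simN'N_fun (i k : nat) : int :=
  match i, k with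
  | 2, 0 => 1
  | 0, 1 | 1, 2 => 2
  | _, _ => if (i == k) && (3 <= i)%N then 1 else 0
  end%N.

Definition simNN' : 'M[int]_11 := fun_mx 11 simNN'_fun.
Definition simN'N : 'M[int]_11 := fun_mx 11 simN'N_fun.

Definition e8_inv_entry (a b : nat) : int :=
  nth 0 (nth [::] [:: [:: -4; -5; -7; -10; -8; -6; -4; -2];
   [:: -5; -8; -10; -15; -12; -9; -6; -3]; [:: -7; -10; -14; -20; -16; -12; -8; -4];
   [:: -10; -15; -20; -30; -24; -18; -12; -6]; [:: -8; -12; -16; -24; -20; -15; -10; -5];
   [:: -6; -9; -12; -18; -15; -12; -8; -4]; [:: -4; -6; -8; -12; -10; -8; -6; -3];
   [:: -2; -3; -4; -6; -5; -4; -3; -2]] a) b.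

Definition invE8 : 'M[int]_11 := fun_mx 11 (fun i j =>
  if ((3 <= i) && (3 <= j))%N then e8_inv_entry (i - 3) (j - 3) else 0).

Definition projE8 : 'M[int]_11 := fun_mx 11 (fun i j =>
  if (i == j) && (3 <= i)%N then 1 else 0).

Lemma simNN'_simN'N : simNN' *m simN'N = 2%:M.
Proof. by rewrite fun_mxM scalar_fun_mx; apply: fun_mx_eq; vm_compute. Qed.

Lemma simN'N_simNN' : simN'N *m simNN' = 2%:M.
Proof. by rewrite fun_mxM scalar_fun_mx; apply: fun_mx_eq; vm_compute. Qed.

Lemma simNN'_gram : simNN'^T *m gramN' *m simNN' = 2 *: gramN.
Proof.
rewrite gramN'E gramNE fun_mx_tr !fun_mxM scale_fun_mx.
by apply: fun_mx_eq; vm_compute.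
Qed.

Lemma simN'N_gram : simN'N^T *m gramN *m simN'N = 2 *: gramN'.
Proof.
rewrite gramN'E gramNE fun_mx_tr !fun_mxM scale_fun_mx.
by apply: fun_mx_eq; vm_compute.
Qed.

Lemma invE8_gramN' : invE8 *m gramN' = projE8.
Proof. by rewrite gramN'E fun_mxM; apply: fun_mx_eq; vm_compute. Qed.

Lemma orthN_entry_even (g : 'M[int]_11) :
  g \in unitmx -> g^T *m gramN *m g = gramN ->
  forall r c : 'I_11, (r < 2)%N -> (2 <= c)%N -> (2 %| g r c)%Z.
Proof.
move=> gu gG r c r_lt2 c_ge2.
have even_col : forall i, (2 %| (gramN *m g) i c)%Z.
  apply: orth_gram_col_even => // k; rewrite gramNE mxE.
  have even_cols : all_entries 11 (fun k c => (2 <= c)%N ==> (2 %| gramN_fun k c)%Z).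
    by vm_compute.
  exact: implyP (all_entriesP even_cols k c) c_ge2.
rewrite gramNE in even_col; rewrite -[g r c]mul1r.
case: r r_lt2 => [[|[|//]] r_lt] _.
- rewrite -(fun_mx_row_delta (f := gramN_fun) (a := @Ordinal 11 1 isT)).
    exact: even_col.
  by vm_compute.
- rewrite -(fun_mx_row_delta (f := gramN_fun) (a := @Ordinal 11 0 isT)).
    exact: even_col.
  by vm_compute.
Qed.

Lemma even_of_isotropic (x0 x1 x2 s : int) :
  x0 * (2 * x0) + (x1 * (2 * x2) + (x2 * (2 * x1) + s)) = 0 -> (4 %| s)%Z ->
  (2 %| x0)%Z.
Proof.
move=> iso /dvdzP[q s_eq]; have : (2 %| x0 * x0)%Z.
  apply/dvdzP; exists (- (x1 * x2) - q); apply: (@mulfI _ 2) => //.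
  by rewrite -[LHS]subr0 -iso s_eq; ring.
by rewrite !dvdzE abszM Euclid_dvdM // orbb.
Qed.

Lemma orthN'_entry_even (h : 'M[int]_11) :
  h \in unitmx -> h^T *m gramN' *m h = gramN' ->
  forall i j : 'I_11, (i == 0 :> nat) || (3 <= i)%N ->
  (j == 1 :> nat) || (j == 2 :> nat) -> (2 %| h i j)%Z.
Proof.
move=> hu hG i j i_out j_U.
have even_col : forall k, (2 %| (gramN' *m h) k j)%Z.
  apply: orth_gram_col_even => // k; rewrite gramN'E mxE.
  have even_cols : all_entries 11 (fun k c =>
      ((c == 1) || (c == 2)) ==> (2 %| gramN'_fun k c)%Z) by vm_compute.
  exact: implyP (all_entriesP even_cols k j) j_U.
have even_E8 : forall k : 'I_11, (3 <= k)%N -> (2 %| h k j)%Z.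
  move=> k k_ge3; have := mulmx_col_even invE8 even_col k.
  rewrite mulmxA invE8_gramN' (@mulmx_row_delta 11 projE8 h k k j 1) ?mul1r // => m.
  by rewrite mxE k_ge3 andbT eq_sym.
case/orP: i_out => [/eqP i0|]; last exact: even_E8.
(* Column [j] of [h] is isotropic; modulo 4 only the <2>-coordinate survives. *)
have iso : \sum_k h k j * (gramN' *m h) k j = 0.
  transitivity ((h^T *m (gramN' *m h)) j j).
    by rewrite mxE; apply: eq_bigr => k _; rewrite [h^T _ _]mxE.
  by rewrite mulmxA hG gramN'E mxE; case/orP: j_U => /eqP->.
rewrite 3!big_ord_recl gramN'E in iso.
rewrite (fun_mx_row_delta (a := ord0) (b := ord0) (c := 2)) in iso;
  last by vm_compute.
rewrite (fun_mx_row_delta (a := lift ord0 ord0) (b := lift ord0 (lift ord0 ord0))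
  (c := 2)) in iso; last by vm_compute.
rewrite (fun_mx_row_delta (a := lift ord0 (lift ord0 ord0)) (b := lift ord0 ord0)
  (c := 2)) in iso; last by vm_compute.
have -> : i = ord0 by apply: val_inj.
apply: even_of_isotropic iso _; rewrite -gramN'E.
have -> : (4 : int) = 2 * 2 by [].
apply: rpred_sum => k _; apply: dvdz_mul; last exact: even_col.
by apply: even_E8; rewrite !lift0.
Qed.

Lemma simNN'_conj_even g : g \in unitmx -> g^T *m gramN *m g = gramN ->
  forall i j, (2 %| (simNN' *m g *m simN'N) i j)%Z.
Proof.
move=> gu gG; apply: mulmx3_even => i k l j; rewrite !mxE.
have simNN'_even : all_entries 11 (fun i k => (2 %| simNN'_fun i k)%Z || (k < 2)%N).
  by vm_compute.
have simN'N_even : all_entries 11 (fun l j => (2 %| simN'N_fun l j)%Z || (2 <= l)%N).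
  by vm_compute.
case/orP: (all_entriesP simNN'_even i k) => [-> //|k_lt2].
case/orP: (all_entriesP simN'N_even l j) => [->|l_ge2]; first by rewrite !orbT.
by rewrite (orthN_entry_even gu gG k_lt2 l_ge2) orbT.
Qed.

Lemma simN'N_conj_even h : h \in unitmx -> h^T *m gramN' *m h = gramN' ->
  forall i j, (2 %| (simN'N *m h *m simNN') i j)%Z.
Proof.
move=> hu hG; apply: mulmx3_even => i k l j; rewrite !mxE.
have simN'N_even : all_entries 11 (fun i k =>
    (2 %| simN'N_fun i k)%Z || ((k == 0) || (3 <= k)%N)) by vm_compute.
have simNN'_even : all_entries 11 (fun l j =>
    (2 %| simNN'_fun l j)%Z || ((l == 1) || (l == 2))) by vm_compute.
case/orP: (all_entriesP simN'N_even i k) => [-> //|k_out].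
case/orP: (all_entriesP simNN'_even l j) => [->|l_U]; first by rewrite !orbT.
by rewrite (orthN'_entry_even hu hG k_out l_U) orbT.
Qed.

Theorem theorem6p2 (R : realType) : period_quotients_isomorphic R gramN gramN'.
Proof.
apply: (@period_quotients_isomorphic_of_similitudes R 11 _ _ simNN' simN'N).
- exact: simNN'_simN'N.
- exact: simN'N_simNN'.
- exact: simNN'_gram.
- exact: simN'N_gram.
- exact: simNN'_conj_even.
- exact: simN'N_conj_even.
Qed.
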